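(* Let $\mathcal D^S$ denote the class of all functions $d:\mathbb{R}^n\times\mathbb{R}^n\to\mathbb{R}$ of the form $$d(x,y)=\phi(x)-\phi(y)-\langle s(y),\,x-y\rangle\qquad(x,y\in\mathbb{R}^n),$$ where $\phi:\mathbb{R}^n\to\mathbb{R}$ is a (finite-valued) convex function and $s:\mathbb{R}^n\to\mathbb{R}^n$ is a subgradient map of $\phi$, i.e. $s(y)\in\partial\phi(y)$ for every $y$. Let $d:\mathbb{R}^n\times\mathbb{R}^n\to\mathbb{R}$ be a divergence, i.e. $d(x,y)\ge 0$ for all $x,y$ and $d(y,y)=0$ for all $y$. Then $d\in\mathcal D^S$ if and only if both of the following hold: (i) for every $a\in\mathbb{R}^n$, the map $x\mapsto d(x,a)$ is convex; (ii) for every $a,b\in\mathbb{R}^n$, the map $x\mapsto d(x,a)-d(x,b)$ is affine, i.e. of the form $x\mapsto\langle h,x\rangle+c$ for some $h\in\mathbb{R}^n$ and $c\in\mathbb{R}$.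
   Context: $\partial\phi(y)=\{g\in\mathbb{R}^n:\ \phi(x)\ge\phi(y)+\langle g,x-y\rangle\ \forall x\}$ denotes the subdifferential of the convex function $\phi$ at $y$. The divergences in $\mathcal D^S$ are called generalized Bregman divergences. *)

(* R^n is 'rV[R]_n over an arbitrary real field R. *)
From HB Require Import structures.
From mathcomp Require Import all_boot all_order all_algebra.
Set Implicit Arguments. Unset Strict Implicit. Unset Printing Implicit Defensive.
Import Order.TTheory GRing.Theory Num.Theory.
Local Open Scope ring_scope.

Definition dotv (R : realFieldType) (n : nat) (u v : 'rV[R]_n) : R :=
  \sum_(i < n) u 0 i * v 0 i.

Definition convexf (R : realFieldType) (n : nat) (f : 'rV[R]_n -> R) : Prop :=
  forall (x y : 'rV[R]_n) (t : R), 0 <= t -> t <= 1 ->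
    f (t *: x + (1 - t) *: y) <= t * f x + (1 - t) * f y.

Definition affinef (R : realFieldType) (n : nat) (f : 'rV[R]_n -> R) : Prop :=
  exists (h : 'rV[R]_n) (c : R), forall x, f x = dotv h x + c.

Definition in_subdiff (R : realFieldType) (n : nat) (phi : 'rV[R]_n -> R)
  (y g : 'rV[R]_n) : Prop :=
  forall x, phi y + dotv g (x - y) <= phi x.

Definition divergence (R : realFieldType) (n : nat)
  (d : 'rV[R]_n -> 'rV[R]_n -> R) : Prop :=
  (forall x y, 0 <= d x y) /\ (forall y, d y y = 0).

Definition in_DS (R : realFieldType) (n : nat)
  (d : 'rV[R]_n -> 'rV[R]_n -> R) : Prop :=
  exists (phi : 'rV[R]_n -> R) (s : 'rV[R]_n -> 'rV[R]_n),
    convexf phi /\ (forall y, in_subdiff phi y (s y)) /\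
    (forall x y, d x y = phi x - phi y - dotv (s y) (x - y)).

From HB Require Import structures.
From mathcomp Require Import all_boot all_order all_algebra.
From mathcomp Require Import ring lra.
From Stdlib Require Import IndefiniteDescription.
Set Implicit Arguments. Unset Strict Implicit. Unset Printing Implicit Defensive.
Import Order.TTheory GRing.Theory Num.Theory.
Local Open Scope ring_scope.

(* Write B_{phi,s}(x, y) = phi x - phi y - <s y, x - y>.

   (=>) For fixed a, x |-> B(x, a) is phi plus an affine function, hence
   convex; and B(x, a) - B(x, b) is affine since the phi x terms cancel.

   (<=) Put phi := d(., 0).  Choosing, for every y, the affine function
   d(., y) - d(., 0) = <h y, .> + c y, the condition d(y, y) = 0 fixes
   c y, which yields d = B_{phi, -h}.  Convexity of phi is hypothesis (i)
   at a = 0, and nonnegativity of d = B_{phi, -h} says exactly that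
   -h y is a subgradient of phi at y. *)

Section InnerProduct.
Variables (R : realFieldType) (n : nat).
Implicit Types (u v x y : 'rV[R]_n).

Lemma dotvDr u x y : dotv u (x + y) = dotv u x + dotv u y.
Proof. rewrite /dotv -big_split; apply: eq_bigr => i _; by rewrite mxE mulrDr. Qed.

Lemma dotvBr u x y : dotv u (x - y) = dotv u x - dotv u y.
Proof. rewrite /dotv -sumrB; apply: eq_bigr => i _; by rewrite !mxE mulrBr. Qed.

Lemma dotvZr u (t : R) x : dotv u (t *: x) = t * dotv u x.
Proof. rewrite /dotv mulr_sumr; apply: eq_bigr => i _; by rewrite !mxE mulrCA. Qed.

Lemma dotvBl u v x : dotv (u - v) x = dotv u x - dotv v x.
Proof. rewrite /dotv -sumrB; apply: eq_bigr => i _; by rewrite !mxE mulrBl. Qed.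

Lemma dotvNl u x : dotv (- u) x = - dotv u x.
Proof. rewrite /dotv -sumrN; apply: eq_bigr => i _; by rewrite !mxE mulNr. Qed.

End InnerProduct.

Section Affine.
Variables (R : realFieldType) (n : nat).
Implicit Types (f g : 'rV[R]_n -> R).

Lemma convexf_ext f g : (forall x, f x = g x) -> convexf f -> convexf g.
Proof. by move=> efg cf x y t t0 t1; rewrite -!efg; exact: cf. Qed.

Lemma affinef_ext f g : (forall x, f x = g x) -> affinef f -> affinef g.
Proof. by move=> efg [h [c hf]]; exists h, c => x; rewrite -efg. Qed.

Lemma affinef_comb g x y (t : R) : affinef g ->
  g (t *: x + (1 - t) *: y) = t * g x + (1 - t) * g y.
Proof. by case=> h [c hg]; rewrite !hg dotvDr !dotvZr; ring. Qed.

Lemma convexf_add_affine f g : convexf f -> affinef g ->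
  convexf (fun x => f x + g x).
Proof.
move=> cf ag x y t t0 t1; rewrite (affinef_comb x y t ag) !mulrDr.
have := cf x y t t0 t1; lra.
Qed.

Lemma affinef_choice (A : Type) (F : A -> 'rV[R]_n -> R) :
  (forall a, affinef (F a)) ->
  exists (h : A -> 'rV[R]_n) (c : A -> R),
    forall a x, F a x = dotv (h a) x + c a.
Proof.
move=> aF.
have [hc Hhc] := functional_choice
  (fun a (p : 'rV[R]_n * R) => forall x, F a x = dotv p.1 x + p.2)
  (fun a => let: ex_intro h (ex_intro c Hc) := aF a in ex_intro _ (h, c) Hc).
by exists (fun a => (hc a).1), (fun a => (hc a).2).
Qed.

End Affine.

Section Bregman.
Variables (R : realFieldType) (n : nat).
Implicit Types (phi : 'rV[R]_n -> R) (s : 'rV[R]_n -> 'rV[R]_n).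

Definition bregman phi s (x y : 'rV[R]_n) : R :=
  phi x - phi y - dotv (s y) (x - y).

Lemma in_subdiff_bregman phi s y :
  (forall x, 0 <= bregman phi s x y) -> in_subdiff phi y (s y).
Proof. by move=> hge x; have := hge x; rewrite /bregman; lra. Qed.

(* x |-> B(x, a) is phi plus an affine function of x. *)
Lemma bregman_convex phi s a : convexf phi -> convexf (bregman phi s ^~ a).
Proof.
move=> cphi; apply: (convexf_ext (f := fun x =>
  phi x + (dotv (- s a) x + (- phi a + dotv (s a) a)))).
  by move=> x; rewrite /bregman dotvNl dotvBr; ring.
by apply: convexf_add_affine => //; exists (- s a), (- phi a + dotv (s a) a).
Qed.

(* The phi x terms cancel in B(x, a) - B(x, b). *)
Lemma bregman_diff_affine phi s a b :
  affinef (fun x => bregman phi s x a - bregman phi s x b).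
Proof.
exists (s b - s a), (- phi a + dotv (s a) a + phi b - dotv (s b) b) => x.
by rewrite /bregman !dotvBr dotvBl; ring.
Qed.

Lemma bregman_of_affine_diff (d : 'rV[R]_n -> 'rV[R]_n -> R)
    (h : 'rV[R]_n -> 'rV[R]_n) (c : 'rV[R]_n -> R) :
  (forall y, d y y = 0) ->
  (forall y x, d x y - d x 0 = dotv (h y) x + c y) ->
  forall x y, d x y = bregman (d ^~ 0) (fun y => - h y) x y.
Proof.
move=> hdiag hdiff x y; have hx := hdiff y x; have hy := hdiff y y.
rewrite hdiag in hy; rewrite /bregman dotvNl dotvBr; lra.
Qed.

End Bregman.

Theorem theorem1 (R : realFieldType) (n : nat)
  (d : 'rV[R]_n -> 'rV[R]_n -> R) (hd : divergence d) :
  in_DS d <->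
  ((forall a : 'rV[R]_n, convexf (fun x => d x a)) /\
   (forall a b : 'rV[R]_n, affinef (fun x => d x a - d x b))).
Proof.
case: hd => hge hdiag; split.
- case=> phi [s [cphi [_ hdef]]].
  split=> [a | a b].
  + by apply: convexf_ext (bregman_convex s a cphi) => x; rewrite hdef.
  + by apply: affinef_ext (bregman_diff_affine phi s a b) => x; rewrite !hdef.
- case=> hconv haff.
  have [h [c hdiff]] :=
    affinef_choice (F := fun y x => d x y - d x 0) (fun y => haff y 0).
  have hB := bregman_of_affine_diff hdiag hdiff.
  exists (d ^~ 0), (fun y => - h y); split; first exact: hconv.
  split=> [y | //]; apply: (in_subdiff_bregman (s := fun y => - h y)) => x; rewrite -hB; exact: hge.
Qed.
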